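(* For every $n\ge1$, the nilpotency index of any $n$-dimensional complex nilpotent anticommutative algebra is at most $F_n+1$. This bound is sharp; for $n\ge6$ it is attained by the algebras of the family $\mathcal{T}_n$.
   Context: $F_n$ denotes the Fibonacci numbers, $F_1=F_2=1$, $F_{n}=F_{n-1}+F_{n-2}$. For an algebra $N$, $N^1=N$, $N^{k+1}=\sum_{i=1}^kN^iN^{k+1-i}$; $N$ is nilpotent if some $N^k=0$, and its nilpotency index is the least such $k\ge1$. An algebra is anticommutative if $xy=-yx$. With respect to a basis $e_1,\dots,e_n$ and structure constants $e_ie_j=\sum_kc_{ij}^ke_k$, for $n\ge6$, $\mathcal{T}_n$ is the family of anticommutative algebras with $c_{ij}^k=0$ whenever $k\le\max\{i,j\}$, such that: $e_ie_{i+1}=e_{i+2}$ for $1\le i\le n-2$; $c_{1i}^{i+2}=c_{2i}^{i+2}=0$ for $4\le i\le n-2$; $c_{13}^4=c_{14}^5=c_{24}^5=c_{15}^6=c_{25}^6=c_{13}^6=0$; $c_{13}^5\ne0$; $c_{35}^6=1$ and (when $n\ge7$) $c_{46}^7=1$; other structure constants arbitrary subject to these and anticommutativity. *)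

From HB Require Import structures.
From mathcomp Require Import all_boot all_order all_algebra.
From mathcomp Require Import reals.
From mathcomp Require Import complex.
Set Implicit Arguments. Unset Strict Implicit. Unset Printing Implicit Defensive.
Import Order.TTheory GRing.Theory Num.Theory.
Local Open Scope ring_scope.

Fixpoint fib (n : nat) : nat :=
  match n with
  | 0 => 0
  | 1 => 1
  | (m.+1 as k).+1 => fib k + fib m
  end.

Section Alg.
Variables (F : fieldType) (n : nat).

(* An n-dimensional algebra over F is given by structure constants with respect
   to a basis e_1,...,e_n: c i j k = c_{ij}^k, indices 1-based (1 <= i,j,k <= n);
   values outside this range are irrelevant.  Vectors are row vectors 'rV_n,
   coordinate (k : 'I_n) corresponding to e_{k+1}. *)
Definition amul (c : nat -> nat -> nat -> F) (x y : 'rV[F]_n) : 'rV[F]_n :=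
  \row_(k < n) \sum_(i < n) \sum_(j < n) x 0 i * y 0 j * c i.+1 j.+1 k.+1.

Definition anticomm (c : nat -> nat -> nat -> F) : Prop :=
  forall x y : 'rV[F]_n, amul c x y = - amul c y x.

(* product of two subspaces (represented by matrices whose row spaces they are):
   the span of all products u v, u in A, v in B (spanned by products of rows). *)
Definition subprod (c : nat -> nat -> nat -> F) (A B : 'M[F]_n) : 'M[F]_n :=
  (\sum_(i < n) \sum_(j < n) <<amul c (row i A) (row j B)>>)%MS.

(* powseq c k = [:: N^1; ...; N^k ] with N^1 = N and
   N^{k+1} = sum_{i=1}^k N^i N^{k+1-i}. *)
Fixpoint powseq (c : nat -> nat -> nat -> F) (k : nat) : seq 'M[F]_n :=
  match k with
  | 0 => [::]
  | 1 => [:: 1%:M]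
  | k'.+1 => let s := powseq c k' in
      rcons s (\sum_(i < k') subprod c (nth 0 s i) (nth 0 s (k'.-1 - i)))%MS
  end.

Definition apow (c : nat -> nat -> nat -> F) (k : nat) : 'M[F]_n :=
  nth 0 (powseq c k) k.-1.

Definition pow_zero (c : nat -> nat -> nat -> F) (k : nat) : Prop :=
  (apow c k == (0 : 'M[F]_n))%MS.

Definition nil_index (c : nat -> nat -> nat -> F) (m : nat) : Prop :=
  (1 <= m)%N /\ pow_zero c m /\ (forall k, (1 <= k < m)%N -> ~ pow_zero c k).

Definition nilpotent_alg (c : nat -> nat -> nat -> F) : Prop :=
  exists k, (1 <= k)%N /\ pow_zero c k.

Definition in_T (c : nat -> nat -> nat -> F) : Prop :=
  anticomm c /\
  [/\ (forall i j k, (1 <= i <= n)%N -> (1 <= j <= n)%N -> (1 <= k <= n)%N ->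
         (k <= maxn i j)%N -> c i j k = 0),
      (forall i k, (1 <= i <= n - 2)%N -> (1 <= k <= n)%N ->
         c i i.+1 k = (k == i.+2)%:R),
      (forall i, (4 <= i <= n - 2)%N -> (c 1 i i.+2 = 0 /\ c 2 i i.+2 = 0)),
      [/\ c 1 3 4 = 0, c 1 4 5 = 0, c 2 4 5 = 0, c 1 5 6 = 0
        & (c 2 5 6 = 0 /\ c 1 3 6 = 0)]
    & [/\ c 1 3 5 != 0, c 3 5 6 = 1 & ((7 <= n)%N -> c 4 6 7 = 1)]].

End Alg.

From HB Require Import structures.
From mathcomp Require Import all_boot all_order all_algebra.
From mathcomp Require Import reals.
From mathcomp Require Import complex.
From mathcomp Require Import zify.
Set Implicit Arguments. Unset Strict Implicit. Unset Printing Implicit Defensive.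
Import Order.TTheory GRing.Theory Num.Theory.
Local Open Scope ring_scope.

(* Write N^t for the t-th power of the algebra N (subspaces of F^n, as row
   spaces of matrices) and D t for dim N^t.  The chain N^1 >= N^2 >= ... is
   decreasing, and N^a N^b <= N^(a+b).  Call t a jump if N^t is not contained
   in N^(t+1).  The key estimate is
        W a jump  ==>  W <= F_(n - D W + 1),
   proved by strong induction: some product N^a N^b with a + b = W escapes
   N^(W+1), which forces jumps at a and b, hence (for a < b) the rank drops
   D a > D b > D W; for a = b a drop of exactly one is excluded because
   anticommutativity gives N^a N^a <= N^a N^(a+1) + N^(a+1) N^a when N^(a+1)
   has codimension one in N^a.  The Fibonacci recurrence then closes the
   induction.  Consequently no jump happens beyond F_n, which bounds the
   nilpotency index.  Sharpness: for a strictly triangular algebra with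
   e_i e_(i+1) = e_(i+2) (this covers the family T_n and the explicit "chain"
   algebra) the basis vector e_n lies in N^(F_n), and such an algebra is
   nilpotent, so its index is exactly F_n + 1. *)

Lemma fib_SS k : fib k.+2 = (fib k.+1 + fib k)%N.
Proof. by []. Qed.

Lemma fib_mono : {homo fib : a b / (a <= b)%N}.
Proof.
apply: homo_leq => [//|b a d|[|k] //]; first exact: leq_trans.
by rewrite fib_SS leq_addr.
Qed.

Lemma fib_pos k : (1 <= k)%N -> (1 <= fib k)%N.
Proof. exact: (@fib_mono 1). Qed.

Lemma fib_sum_bound p q s : (p.+2 <= s)%N -> (q.+1 <= s)%N ->
  (fib p.+1 + fib q.+1 <= fib s.+1)%N.
Proof.
case: s => [|[|s]] // ps qs; rewrite fib_SS addnC.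
by apply: leq_add; apply: fib_mono.
Qed.

Section Algebra.
Variables (F : fieldType) (n : nat) (c : nat -> nat -> nat -> F).

(* Right and left multiplication operators: u v = u *m Ml v = v *m Mr u. *)
Definition Ml (y : 'rV[F]_n) : 'M[F]_n :=
  \matrix_(i < n, k < n) \sum_(j < n) y 0 j * c i.+1 j.+1 k.+1.
Definition Mr (x : 'rV[F]_n) : 'M[F]_n :=
  \matrix_(j < n, k < n) \sum_(i < n) x 0 i * c i.+1 j.+1 k.+1.

Lemma amulEl x y : amul c x y = x *m Ml y.
Proof.
apply/rowP => k; rewrite !mxE; apply: eq_bigr => i _.
rewrite !mxE big_distrr /=; apply: eq_bigr => j _; by rewrite mulrA.
Qed.

Lemma amulEr x y : amul c x y = y *m Mr x.
Proof.
apply/rowP => k; rewrite !mxE exchange_big; apply: eq_bigr => j _.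
rewrite !mxE big_distrr /=; apply: eq_bigr => i _.
by rewrite (mulrC (x 0 i)) mulrA.
Qed.

Lemma amulDl (x y z : 'rV[F]_n) : amul c (x + y) z = amul c x z + amul c y z.
Proof. by rewrite !amulEl mulmxDl. Qed.
Lemma amulDr (x y z : 'rV[F]_n) : amul c z (x + y) = amul c z x + amul c z y.
Proof. by rewrite !amulEr mulmxDl. Qed.
Lemma amulZl a (x z : 'rV[F]_n) : amul c (a *: x) z = a *: amul c x z.
Proof. by rewrite !amulEl scalemxAl. Qed.
Lemma amulZr a (x z : 'rV[F]_n) : amul c z (a *: x) = a *: amul c z x.
Proof. by rewrite !amulEr scalemxAl. Qed.

Lemma subprod_mem (A B : 'M[F]_n) (u v : 'rV[F]_n) : (u <= A)%MS -> (v <= B)%MS ->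
  (amul c u v <= subprod c A B)%MS.
Proof.
move=> /submxP[w ->] /submxP[w' ->].
rewrite amulEl -mulmxA; apply: submx_trans (submxMl _ _) _.
apply/row_subP => i; rewrite row_mul -amulEl amulEr -mulmxA.
apply: submx_trans (submxMl _ _) _.
apply/row_subP => j; rewrite row_mul -amulEr.
by rewrite /subprod (sumsmx_sup i) // (sumsmx_sup j) // genmxE.
Qed.

Lemma subprodP (A B C : 'M[F]_n) :
  reflect (forall u v, (u <= A)%MS -> (v <= B)%MS -> (amul c u v <= C)%MS)
          (subprod c A B <= C)%MS.
Proof.
apply: (iffP idP) => [sABC u v uA vB|H].
  exact: submx_trans (subprod_mem uA vB) sABC.
apply/sumsmx_subP => i _; apply/sumsmx_subP => j _; rewrite genmxE.
by apply: H; apply: row_sub.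
Qed.

Lemma subprodS (A A' B B' : 'M[F]_n) : (A <= A')%MS -> (B <= B')%MS ->
  (subprod c A B <= subprod c A' B')%MS.
Proof.
move=> sAA' sBB'; apply/subprodP => u v uA vB.
by apply: subprod_mem; [exact: submx_trans sAA' | exact: submx_trans sBB'].
Qed.

Local Notation N := (apow n c).

Lemma size_powseq k : size (powseq n c k) = k.
Proof. by elim: k => [|[|k] IH] //=; rewrite size_rcons IH. Qed.

Lemma powseqSS k : powseq n c k.+2 = rcons (powseq n c k.+1)
  (\sum_(i < k.+1) subprod c (nth 0 (powseq n c k.+1) i)
                              (nth 0 (powseq n c k.+1) (k - i)))%MS.
Proof. by []. Qed.

Lemma powseq_nth k i : (i < k)%N -> nth 0 (powseq n c k) i = N i.+1.
Proof.
elim: k => [|k IH] // ik; rewrite /apow.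
move: ik; rewrite ltnS leq_eqVlt => /orP[/eqP-> //|ik].
case: k ik IH => // k ik IH.
by rewrite powseqSS nth_rcons size_powseq ik IH.
Qed.

Lemma apow1 : N 1 = 1%:M.
Proof. by []. Qed.

Lemma apowS k : N k.+2 = (\sum_(i < k.+1) subprod c (N i.+1) (N (k - i).+1))%MS.
Proof.
rewrite {1}/apow powseqSS nth_rcons size_powseq ltnn eqxx.
by apply: eq_bigr => i _; rewrite !powseq_nth // ltnS ?leq_subr // -ltnS.
Qed.

Lemma apow_le k : (N k.+2 <= N k.+1)%MS.
Proof.
elim/ltn_ind: k => -[|k] IH; first by rewrite apow1 submx1.
rewrite (apowS k.+1) (apowS k); apply/sumsmx_subP => i _.
have [ik|ki] := ltnP i k.+1.
  apply: (sumsmx_sup (Ordinal ik)) => //=; apply: subprodS => //.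
  by rewrite subSn -1?ltnS //; apply: IH; rewrite ltnS leq_subr.
have -> : (i : nat) = k.+1 by apply/eqP; rewrite eqn_leq ki -ltnS ltn_ord.
apply: (sumsmx_sup (Ordinal (ltnSn k))) => //=.
by rewrite !subnn; apply: subprodS => //; apply: IH.
Qed.

Lemma apow_mono a b : (1 <= a <= b)%N -> (N b <= N a)%MS.
Proof.
case/andP=> a1 ab; rewrite -(subnKC ab); elim: (b - a)%N => [|d IH].
  by rewrite addn0.
apply: submx_trans IH; rewrite addnS -[(a + d)%N]prednK ?apow_le //.
by rewrite addn_gt0 a1.
Qed.

(* N^a N^b <= N^(a+b): it is one summand of the recursion. *)
Lemma prod_sub a b : (1 <= a)%N -> (1 <= b)%N ->
  (subprod c (N a) (N b) <= N (a + b))%MS.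
Proof.
case: a => // a _; case: b => // b _.
rewrite addSn addnS apowS.
have ab : (a < (a + b).+1)%N by rewrite ltnS leq_addr.
by apply: (sumsmx_sup (Ordinal ab)) => //=; rewrite addKn.
Qed.

Lemma pow_zeroP k : pow_zero n c k <-> (N k <= (0 : 'M[F]_n))%MS.
Proof. by rewrite /pow_zero; split=> [/andP[]|->]; rewrite ?sub0mx. Qed.

Definition jump (t : nat) : bool := ~~ (N t <= N t.+1)%MS.

Local Notation D t := (\rank (N t)).

Lemma D_mono a b : (1 <= a <= b)%N -> (D b <= D a)%N.
Proof. by move=> ab; apply/mxrankS/apow_mono. Qed.

Lemma jump_rank t : (1 <= t)%N -> jump t -> (D t.+1 < D t)%N.
Proof.
case: t => // t _ jt; have [le_rank eq_rank] := mxrank_leqif_sup (apow_le t).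
by rewrite ltn_neqAle le_rank andbT eq_rank.
Qed.

Lemma escape_jump a b : (1 <= a)%N -> (1 <= b)%N ->
  ~~ (subprod c (N a) (N b) <= N (a + b).+1)%MS -> jump a && jump b.
Proof.
move=> a1 b1 esc; apply/andP; rewrite /jump; split; apply: contra esc => sub.
  by apply: submx_trans (subprodS sub (submx_refl _)) _; rewrite -addSn prod_sub.
by apply: submx_trans (subprodS (submx_refl _) sub) _; rewrite -addnS prod_sub.
Qed.

Section Anticommutative.
Hypotheses (Hac : anticomm n c) (two_neq0 : (2%:R : F) != 0).

Lemma amul_xx (x : 'rV[F]_n) : amul c x x = 0.
Proof.
have /eqP := Hac x x; rewrite -addr_eq0 -mulr2n -scaler_nat scaler_eq0.
by rewrite (negPf two_neq0) => /eqP.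
Qed.

Lemma subprodC_sub (A B C : 'M[F]_n) :
  (subprod c A B <= C)%MS = (subprod c B A <= C)%MS.
Proof.
by apply/subprodP/subprodP => H u v uA vB; rewrite Hac (eqmx_opp _) H.
Qed.

Lemma codim1_decomp (A B : 'M[F]_n) : (B <= A)%MS ->
  \rank A = (\rank B).+1 -> exists2 x : 'rV[F]_n, (x <= A)%MS & (A <= x + B)%MS.
Proof.
move=> sBA rA.
have /row_subPn[i Bi] : ~~ (A <= B)%MS by apply/negP => /mxrankS; rewrite rA ltnn.
exists (row i A); first exact: row_sub.
have sxBA : (row i A + B <= A)%MS by rewrite addsmx_sub row_sub sBA.
have rxB : (\rank B < \rank (row i A + B))%N.
  have [le_rank eq_rank] := mxrank_leqif_sup (addsmxSr (row i A) B).
  rewrite ltn_neqAle le_rank andbT eq_rank.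
  by apply: contra Bi; apply: submx_trans; apply: addsmxSl.
have /andP[//] : (row i A + B == A)%MS.
by have [_ <-] := mxrank_leqif_eq sxBA; rewrite eqn_leq mxrankS //= rA.
Qed.

(* If B has codimension one in A then A A <= A B + B A:
   writing u = a x + u', v = b x + v' the term x x vanishes. *)
Lemma codim1_prod (A B : 'M[F]_n) : (B <= A)%MS ->
  \rank A = (\rank B).+1 ->
  (subprod c A A <= subprod c A B + subprod c B A)%MS.
Proof.
move=> sBA rA; have [x xA AxB] := codim1_decomp sBA rA.
have split_vec u : (u <= A)%MS -> exists a u', u = a *: x + u' /\ (u' <= B)%MS.
  move=> /submx_trans/(_ AxB)/sub_addsmxP[[u1 u2] /= ->].
  have /sub_rVP[a ->] : (u1 *m x <= x)%MS by apply: submxMl.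
  by exists a, (u2 *m B); split=> //; apply: submxMl.
apply/subprodP => u v /split_vec[a [u' [-> u'B]]] /split_vec[b [v' [-> v'B]]].
have u'A := submx_trans u'B sBA.
rewrite !amulDl !amulDr !amulZl !amulZr amul_xx !scaler0 add0r.
rewrite !addmx_sub ?scalemx_sub //.
- by apply: submx_trans (addsmxSl _ _); apply: subprod_mem.
- by apply: submx_trans (addsmxSr _ _); apply: subprod_mem.
- by apply: submx_trans (addsmxSl _ _); apply: subprod_mem.
Qed.

(* A square N^a N^a escaping N^(2a+1) forces a rank drop of at least two at a:
   a drop of one would give N^a N^a <= N^a N^(a+1) + N^(a+1) N^a. *)
Lemma escape_square_gap a : (1 <= a)%N ->
  ~~ (subprod c (N a) (N a) <= N (a + a).+1)%MS -> ((D a.+1).+2 <= D a)%N.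
Proof.
move=> a1 esc; have /andP[ja _] := escape_jump a1 a1 esc.
have := jump_rank a1 ja; rewrite leq_eqVlt => /orP[/eqP codim1|//].
move/negP: esc; case; apply: submx_trans (codim1_prod _ (esym codim1)) _.
  by apply: apow_mono; rewrite a1 /=.
by rewrite addsmx_sub -{1}addnS prod_sub // -addSn prod_sub.
Qed.

(* The rank
   drops D a > D a.+1 >= D b > D b.+1 >= D W for a < b, and for a = b
   escape_square_gap applies. *)
Lemma jump_bound_step W a b :
  (forall t, (1 <= t < W)%N -> jump t -> (t <= fib (n - D t).+1)%N) ->
  W = (a + b)%N -> (1 <= a)%N -> (1 <= b)%N ->
  ~~ (subprod c (N a) (N b) <= N W.+1)%MS -> (W <= fib (n - D W).+1)%N.
Proof.
move=> IH + a1 b1; wlog ab : a b a1 b1 / (a <= b)%N.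
  move=> wlogH; have [|/ltnW ba] := leqP a b; first exact: wlogH.
  by rewrite addnC subprodC_sub; apply: wlogH.
move=> EW esc; rewrite EW in esc.
have /andP[ja jb] := escape_jump a1 b1 esc.
have Da := jump_rank a1 ja; have Db := jump_rank b1 jb.
have DWb : (D W <= D b.+1)%N by apply: D_mono; lia.
have gap : (D W + 2 <= D a)%N /\ (D W + 1 <= D b)%N.
  have [lt_ab|eq_ab] : (a < b)%N \/ a = b by lia.
    by have := D_mono (_ : 1 <= a.+1 <= b)%N; rewrite lt_ab => /(_ isT); lia.
  by subst b; have := escape_square_gap a1 esc; lia.
have IHa := IH a (_ : 1 <= a < W)%N ja; have IHb := IH b (_ : 1 <= b < W)%N jb.
rewrite {1}EW; apply: leq_trans (leq_add (IHa _) (IHb _)) (fib_sum_bound _ _).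
- by rewrite a1 EW -addn1 leq_add2l.
- by rewrite b1 EW -add1n leq_add2r.
- by have := rank_leq_col (N a); lia.
- by have := rank_leq_col (N b); lia.
Qed.

Lemma jump_bound W : (1 <= W)%N -> jump W -> (W <= fib (n - D W).+1)%N.
Proof.
elim/ltn_ind: W => -[|[|k]] IH // _ jW.
  by rewrite apow1 mxrank1 subnn.
have [i esc] : exists i : 'I_k.+1,
    ~~ (subprod c (N i.+1) (N (k - i).+1) <= N k.+3)%MS.
  apply/existsP; rewrite -negb_forall; apply: contra jW => /forallP sub.
  by rewrite /jump apowS; apply/sumsmx_subP => i _; apply: sub.
apply: (jump_bound_step _ _ _ _ esc) => //.
- by move=> t /andP[t1 tW]; apply: IH.
- by have := ltn_ord i; lia.
Qed.

Lemma jump_le_fib W : (1 <= W)%N -> jump W -> (W <= fib n)%N.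
Proof.
move=> W1 jW; apply: leq_trans (jump_bound W1 jW) (fib_mono _).
have : (0 < D W)%N.
  by rewrite lt0n mxrank_eq0; apply: contraNneq jW => ->; rewrite /jump sub0mx.
by have := rank_leq_col (N W); lia.
Qed.

Lemma apow_stable W : (fib n < W)%N -> (N (fib n).+1 <= N W)%MS.
Proof.
elim: W => // W IH; rewrite ltnS leq_eqVlt => /orP[/eqP<- //|ltW].
apply: submx_trans (IH ltW) _; case jW: (jump W); last by move/negbFE: jW.
by have := jump_le_fib (leq_ltn_trans (leq0n _) ltW) jW; lia.
Qed.

(* The upper bound on the nilpotency index: the last nonzero power is a jump. *)
Lemma nil_index_le m : nil_index n c m -> (m <= fib n + 1)%N.
Proof.
case=> m1 [/pow_zeroP zm minm]; rewrite addn1.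
case: m m1 zm minm => [|[|k]] // _ zk minm.
rewrite ltnS; apply: jump_le_fib => //; apply/negP => sub.
apply: (minm k.+1); first by rewrite ltnS leqnn.
by apply/pow_zeroP; apply: submx_trans sub zk.
Qed.

Lemma nil_index_fib : nilpotent_alg n c -> ~~ (N (fib n) <= (0 : 'M[F]_n))%MS ->
  nil_index n c (fib n + 1).
Proof.
case=> K [K1 /pow_zeroP zK] top; rewrite addn1; split=> //; split.
  apply/pow_zeroP; pose W := maxn K (fib n).+1.
  apply: submx_trans (apow_stable (_ : fib n < W)%N) _.
    by rewrite leq_max leqnn orbT.
  by apply: submx_trans zK; apply: apow_mono; rewrite K1 leq_maxl.
move=> k /andP[k1 kF] /pow_zeroP zk; move/negP: top; apply.
by apply: submx_trans zk; apply: apow_mono; rewrite k1 -ltnS.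
Qed.

End Anticommutative.

Section Triangular.
Hypothesis Htri : forall i j k, (1 <= i <= n)%N -> (1 <= j <= n)%N ->
  (1 <= k <= n)%N -> (k <= maxn i j)%N -> c i j k = 0.
Hypothesis Hchain : forall i k, (1 <= i <= n - 2)%N -> (1 <= k <= n)%N ->
  c i i.+1 k = (k == i.+2)%:R.

(* V t is spanned by e_(t+1), ..., e_n, i.e. the vectors whose first t
   coordinates vanish; triangularity says that N V t + V t N <= V (t+1). *)
Definition V (t : nat) : 'M[F]_n := diag_mx (\row_(i < n) ((t <= i)%N)%:R).

Lemma memV (u : 'rV[F]_n) t :
  (u <= V t)%MS <-> forall i : 'I_n, (i < t)%N -> u 0 i = 0.
Proof.
have uV_id : (forall i : 'I_n, (i < t)%N -> u 0 i = 0) -> u *m V t = u.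
  move=> u0; apply/rowP => i; rewrite mul_mx_diag !mxE.
  by case: leqP => [_|/u0->]; rewrite ?mulr1 ?mul0r.
split=> [/submxP[w ->] i it|/uV_id <-]; last exact: submxMl.
by rewrite mul_mx_diag !mxE leqNgt it mulr0.
Qed.

Lemma amulVl (u v : 'rV[F]_n) t : (u <= V t)%MS -> (amul c u v <= V t.+1)%MS.
Proof.
move/memV => u0; apply/memV => k kt; rewrite mxE.
apply: big1 => i _; apply: big1 => j _.
have [/u0->|ti] := ltnP i t; first by rewrite !mul0r.
rewrite Htri ?mulr0 //; have := ltn_ord i; have := ltn_ord j; have := ltn_ord k; lia.
Qed.

Lemma amulVr (u v : 'rV[F]_n) t : (v <= V t)%MS -> (amul c u v <= V t.+1)%MS.
Proof.
move/memV => v0; apply/memV => k kt; rewrite mxE.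
apply: big1 => i _; apply: big1 => j _.
have [/v0->|tj] := ltnP j t; first by rewrite mulr0 mul0r.
rewrite Htri ?mulr0 //; have := ltn_ord i; have := ltn_ord j; have := ltn_ord k; lia.
Qed.

(* N^a <= V t once a >= 2^t: for a >= 2^(t+1) one factor of each product
   N^i N^(a-i) lies in N^(2^t) <= V t. *)
Lemma apowV t a : (2 ^ t <= a)%N -> (N a <= V t)%MS.
Proof.
elim: t a => [|t IHt] a Ha; first by apply/row_subP => i; apply/memV.
have a2 : (2 <= a)%N by apply: leq_trans Ha; rewrite expnS leq_pmulr ?expn_gt0.
case: a a2 Ha => [|[|k]] // _ Ha; rewrite apowS.
apply/sumsmx_subP => i _; apply/subprodP => u v uN vN.
have [big_i|small_i] := leqP (2 ^ t) i.+1.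
  by apply: amulVl; apply: submx_trans uN (IHt _ big_i).
apply: amulVr; apply: submx_trans vN (IHt _ _).
by have := ltn_ord i; rewrite expnS in Ha; lia.
Qed.

Lemma tri_nilpotent : nilpotent_alg n c.
Proof.
exists (2 ^ n)%N; split; first by rewrite expn_gt0.
apply/pow_zeroP; have <- : V n = 0.
  by apply/matrixP => i j; rewrite !mxE leqNgt ltn_ord mul0rn.
exact: apowV.
Qed.

Lemma amul_delta (p q : 'I_n) :
  amul c (delta_mx 0 p) (delta_mx 0 q) = \row_(k < n) c p.+1 q.+1 k.+1.
Proof.
apply/rowP => k; rewrite !mxE (bigD1 p) //= [X in _ + X]big1 ?addr0; last first.
  by move=> i ip; apply: big1 => j _; rewrite mxE (negPf ip) andbF !mul0r.
rewrite (bigD1 q) //= [X in _ + X]big1 ?addr0; last first.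
  by move=> j jq; rewrite [_ 0 j]mxE (negPf jq) andbF mulr0 mul0r.
by rewrite !mxE !eqxx /= !mul1r.
Qed.

(* The basis vector e_(p+1) lies in N^(F_(p+1)): inductively,
   e_(k+2) = e_k e_(k+1) lies in N^(F_k) N^(F_(k+1)) <= N^(F_(k+2)). *)
Lemma delta_in_apow p (pn : (p < n)%N) :
  ((delta_mx 0 (Ordinal pn) : 'rV[F]_n) <= N (fib p.+1))%MS.
Proof.
elim/ltn_ind: p pn => -[|[|q]] IH pn; rewrite ?apow1 ?submx1 //.
have qn : (q < n)%N := ltnW (ltnW pn).
have q1n : (q.+1 < n)%N := ltnW pn.
have -> : delta_mx 0 (Ordinal pn) =
    amul c (delta_mx 0 (Ordinal qn)) (delta_mx 0 (Ordinal q1n)) :> 'rV[F]_n.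
  apply/rowP => k; rewrite amul_delta !mxE /= Hchain //; first lia.
  by have := ltn_ord k; lia.
apply: submx_trans (subprod_mem (IH q _ qn) (IH q.+1 _ q1n)) _ => //.
by rewrite [fib q.+3]fib_SS addnC prod_sub // fib_pos.
Qed.

Lemma tri_top_nonzero : (1 <= n)%N -> ~~ (N (fib n) <= (0 : 'M[F]_n))%MS.
Proof.
move=> n1; have last_n : (n.-1 < n)%N by rewrite prednK.
have := delta_in_apow last_n; rewrite prednK // => e_last.
apply/negP => /(submx_trans e_last); rewrite submx0.
by move/eqP/rowP/(_ (Ordinal last_n)); rewrite !mxE !eqxx /= => /eqP; rewrite oner_eq0.
Qed.

End Triangular.

Lemma tri_nil_index : anticomm n c -> (2%:R : F) != 0 ->
  (forall i j k, (1 <= i <= n)%N -> (1 <= j <= n)%N ->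
     (1 <= k <= n)%N -> (k <= maxn i j)%N -> c i j k = 0) ->
  (forall i k, (1 <= i <= n - 2)%N -> (1 <= k <= n)%N ->
     c i i.+1 k = (k == i.+2)%:R) ->
  (1 <= n)%N -> nil_index n c (fib n + 1).
Proof.
move=> Hac two_neq0 Htri Hchain n1.
exact: nil_index_fib Hac two_neq0 (tri_nilpotent Htri) (tri_top_nonzero Hchain n1).
Qed.

End Algebra.

Lemma anticomm_skew (F : fieldType) n (c : nat -> nat -> nat -> F) :
  (forall i j k, c j i k = - c i j k) -> anticomm n c.
Proof.
move=> skew x y; apply/rowP => k; rewrite !mxE.
rewrite [X in _ = - X]exchange_big /= -sumrN; apply: eq_bigr => i _.
rewrite -sumrN; apply: eq_bigr => j _.
by rewrite skew mulrN (mulrC (x 0 i)).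
Qed.

Definition chain_alg (F : fieldType) (i j k : nat) : F :=
  ((j == i.+1) && (k == i.+2))%:R - ((i == j.+1) && (k == j.+2))%:R.

Lemma chain_anticomm (F : fieldType) n : anticomm n (@chain_alg F).
Proof. by apply: anticomm_skew => i j k; rewrite /chain_alg opprB. Qed.

Lemma chain_triangular (F : fieldType) i j k :
  (k <= maxn i j)%N -> chain_alg F i j k = 0.
Proof.
move=> kij; rewrite /chain_alg.
have [/andP[/eqP ji /eqP ki]|_] := boolP ((j == i.+1) && (k == i.+2)).
  by move: kij; rewrite ki ji; lia.
have [/andP[/eqP ij /eqP kj]|_] := boolP ((i == j.+1) && (k == j.+2)).
  by move: kij; rewrite kj ij; lia.
by rewrite subr0.
Qed.

Lemma chain_chain (F : fieldType) i k : chain_alg F i i.+1 k = (k == i.+2)%:R.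
Proof.
by rewrite /chain_alg eqxx (ltn_eqF (leqW (leqnn i.+1))) subr0.
Qed.

Theorem mainTheorem4 (R : realType) :
  (forall (n : nat) (c : nat -> nat -> nat -> R[i]), (1 <= n)%N ->
     anticomm n c -> nilpotent_alg n c ->
     forall m, nil_index n c m -> (m <= fib n + 1)%N) /\
  (forall n : nat, (1 <= n)%N ->
     exists c : nat -> nat -> nat -> R[i],
       anticomm n c /\ nil_index n c (fib n + 1)) /\
  (forall (n : nat) (c : nat -> nat -> nat -> R[i]), (6 <= n)%N ->
     in_T n c -> nil_index n c (fib n + 1)).
Proof.
have two_neq0 : (2%:R : R[i]) != 0 by rewrite pnatr_eq0.
split; [|split].
- by move=> n c _ Hac _ m; apply: nil_index_le.
- move=> n n1; exists (@chain_alg R[i]); split; first exact: chain_anticomm.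
  apply: tri_nil_index => //; first exact: chain_anticomm.
    by move=> i j k _ _ _; apply: chain_triangular.
  by move=> i k _ _; apply: chain_chain.
- move=> n c n6 [Hac [Htri Hchain _ _ _]].
  by apply: tri_nil_index => //; apply: leq_trans n6.
Qed.
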